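(* Let $P$ be a finite point set in the plane in general position and let $W$ be a finite point set with $P\cup W$ in general position. If no edge of the Delaunay triangulation $\mathrm{DT}(P)$ is an edge of $\mathrm{DG}^-(P,W)$, then $\mathrm{DG}^-(P,W)$ has no edges.
   Context: Let $P$ (the vertices) and $W$ (the witnesses) be finite point sets in $\mathbb{R}^2$; $P$ and $W$ may share points. The witness Delaunay graph $\mathrm{DG}^-(P,W)$ is the graph with vertex set $P$ in which distinct $x,y\in P$ are adjacent if and only if there is an open disk containing no point of $W$ whose bounding circle passes through $x$ and $y$. General position means that no three distinct points are collinear and no four distinct points are concyclic. For a finite point set $Q$ in general position, $\mathrm{DT}(Q)$ is its Delaunay triangulation: distinct $a,b\in Q$ are joined iff some open disk whose boundary passes through $a$ and $b$ contains no point of $Q$. *)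

(* points of the plane over an arbitrary real closed field R
   (the Euclidean plane is the case R = real numbers). *)
From HB Require Import structures.
From mathcomp Require Import all_boot all_order all_algebra.
Set Implicit Arguments. Unset Strict Implicit. Unset Printing Implicit Defensive.
Import Order.TTheory GRing.Theory Num.Theory.
Local Open Scope ring_scope.

Section Geom.
Variable R : rcfType.

Definition point := (R * R)%type.

Definition dist2 (p q : point) : R := (p.1 - q.1) ^+ 2 + (p.2 - q.2) ^+ 2.

Definition collinear (a b c : point) : Prop :=
  (b.1 - a.1) * (c.2 - a.2) - (b.2 - a.2) * (c.1 - a.1) = 0.

Definition concyclic (a b c d : point) : Prop :=
  exists o : point, [/\ dist2 b o = dist2 a o, dist2 c o = dist2 a o
                      & dist2 d o = dist2 a o].

Definition general_position (Q : seq point) : Prop :=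
  (forall a b c, a \in Q -> b \in Q -> c \in Q ->
     a != b -> a != c -> b != c -> ~ collinear a b c) /\
  (forall a b c d, a \in Q -> b \in Q -> c \in Q -> d \in Q ->
     uniq [:: a; b; c; d] -> ~ concyclic a b c d).

(* There is an open disk (center o, radius |x - o| = |y - o|) whose bounding
   circle passes through x and y and which contains no point of W. *)
Definition empty_disk_through (W : seq point) (x y : point) : Prop :=
  exists o : point, dist2 x o = dist2 y o /\
    forall w, w \in W -> ~ (dist2 w o < dist2 x o).

Definition wdg_edge (P W : seq point) (x y : point) : Prop :=
  [/\ x \in P, y \in P, x != y & empty_disk_through W x y].

Definition dt_edge (Q : seq point) (a b : point) : Prop :=
  [/\ a \in Q, b \in Q, a != b & empty_disk_through Q a b].

End Geom.

(* Take an empty disk through x and y and shrink it, keeping x on its boundary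
   and moving its center along the segment from x to the old center.  The
   shrunk disks stay empty of W, and the first radius at which the boundary
   meets another point q of P gives a disk through x and q that is empty of P
   and of W: x q is then both a Delaunay edge of P and an edge of DG^-(P, W). *)
From HB Require Import structures.
From mathcomp Require Import all_boot all_order all_algebra.
From mathcomp Require Import ring.
Set Implicit Arguments. Unset Strict Implicit. Unset Printing Implicit Defensive.
Import Order.TTheory GRing.Theory Num.Theory.
Local Open Scope ring_scope.

Section Disks.
Variable R : rcfType.
Implicit Types p q x y : point R.

Lemma dist2_ge0 p q : 0 <= dist2 p q.
Proof. by rewrite /dist2 addr_ge0 // sqr_ge0. Qed.

Lemma dist2_gt0 p q : p != q -> 0 < dist2 p q.
Proof.
move=> pq; rewrite lt_def dist2_ge0 andbT; apply: contra pq.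
rewrite /dist2 paddr_eq0 ?sqr_ge0 // !sqrf_eq0 !subr_eq0 => /andP[/eqP p1 /eqP p2].
by rewrite [p]surjective_pairing [q]surjective_pairing p1 p2.
Qed.

Lemma empty_disk_throughS (V W : seq (point R)) x y :
  {subset V <= W} -> empty_disk_through W x y -> empty_disk_through V x y.
Proof. by move=> VW [o [xo Wo]]; exists o; split=> // v /VW; apply: Wo. Qed.

Section Ray.
Variables x o : point R.

Definition ray_center (t : R) : point R :=
  (x.1 + t * (o.1 - x.1), x.2 + t * (o.2 - x.2)).

Definition ray_dot p : R :=
  ((p.1 - x.1) * (o.1 - x.1) + (p.2 - x.2) * (o.2 - x.2)) *+ 2.

(* The t at which the circle of center [ray_center t] through x reaches p;
   meaningless when [ray_dot p <= 0], as no such circle then passes through p. *)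
Definition ray_ratio p : R := dist2 p x / ray_dot p.

Lemma ray_center1 : ray_center 1 = o.
Proof. by rewrite /ray_center !mul1r !subrKC -surjective_pairing. Qed.

Lemma ray_dotxx : ray_dot x = 0.
Proof. by rewrite /ray_dot !subrr !mul0r addr0 mul0rn. Qed.

(* The power of p with respect to the circle of center [ray_center t] through x
   is affine in t. *)
Lemma ray_power p t :
  dist2 p (ray_center t) - dist2 x (ray_center t) = dist2 p x - t * ray_dot p.
Proof. rewrite /dist2 /ray_center /ray_dot /=; ring. Qed.

Lemma ray_outsideE p t :
  (dist2 x (ray_center t) <= dist2 p (ray_center t)) = (t * ray_dot p <= dist2 p x).
Proof. by rewrite -subr_ge0 ray_power subr_ge0. Qed.

Lemma ray_outside p t : 0 <= t -> (0 < ray_dot p -> t <= ray_ratio p) ->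
  ~ dist2 p (ray_center t) < dist2 x (ray_center t).
Proof.
move=> t_ge0 t_le; apply/negP; rewrite -leNgt ray_outsideE.
have [dp_gt0 | dp_le0] := ltP 0 (ray_dot p).
  by rewrite -ler_pdivlMr // t_le.
by apply: le_trans (dist2_ge0 p x); rewrite mulr_ge0_le0.
Qed.

Lemma ray_ratio_ge1 p : ~ dist2 p o < dist2 x o ->
  0 < ray_dot p -> 1 <= ray_ratio p.
Proof.
move/negP; rewrite -leNgt -{1 2}ray_center1 ray_outsideE mul1r => dp_le dp_gt0.
by rewrite ler_pdivlMr // mul1r.
Qed.

Lemma ray_dot_on_circle y : dist2 x o = dist2 y o -> ray_dot y = dist2 y x.
Proof.
move=> xy; have := ray_power y 1; rewrite ray_center1 xy subrr mul1r.
by move/eqP; rewrite eq_sym subr_eq0 eq_sym => /eqP.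
Qed.

End Ray.

Lemma shrink_empty_disk (P W : seq (point R)) x y :
  y \in P -> x != y -> empty_disk_through W x y ->
  exists2 q, (q \in P) && (x != q) & empty_disk_through (P ++ W) x q.
Proof.
move=> yP xy [o [xyo Wo]].
have dy : ray_dot x o y = dist2 y x by rewrite ray_dot_on_circle.
have dy_gt0 : 0 < ray_dot x o y by rewrite dy dist2_gt0 // eq_sym.
have ry : ray_ratio x o y = 1 by rewrite /ray_ratio dy divff ?gt_eqF // -dy.
pose Ps := seq_sub P.
have [[q qP] /= dq_gt0 q_min] := arg_minP (i0 := SeqSub yP : Ps)
  (P := fun p : Ps => 0 < ray_dot x o (val p)) (ray_ratio x o \o val) dy_gt0.
pose t := ray_ratio x o q.
have t_ge0 : 0 <= t by rewrite divr_ge0 ?dist2_ge0 ?ltW.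
have t_le1 : t <= 1 by rewrite -ry (q_min (SeqSub yP)).
have xq : x != q by apply: contraTneq dq_gt0 => <-; rewrite ray_dotxx ltxx.
exists q; first by rewrite qP xq.
exists (ray_center x o t); split.
  apply/eqP; rewrite eq_sym -subr_eq0 ray_power /t /ray_ratio.
  by rewrite divfK ?subrr // lt0r_neq0.
move=> p; rewrite mem_cat => /orP[pP | pW]; apply: ray_outside => // dp_gt0.
  exact: (q_min (SeqSub pP)).
exact: le_trans t_le1 (ray_ratio_ge1 (Wo p pW) dp_gt0).
Qed.

End Disks.

Theorem mainTheorem13 (R : rcfType) (P W : seq (point R)) :
  general_position P ->
  general_position (P ++ W) ->
  (forall x y, dt_edge P x y -> ~ wdg_edge P W x y) ->
  forall x y, ~ wdg_edge P W x y.
Proof.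
move=> _ _ no_common_edge x y [xP yP xy emptyW].
have [q /andP[qP xq] emptyPW] := shrink_empty_disk yP xy emptyW.
apply: (no_common_edge x q); split=> //; apply: empty_disk_throughS emptyPW.
- by move=> p pP; rewrite mem_cat pP.
- by move=> w wW; rewrite mem_cat wW orbT.
Qed.
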